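(* Let $A$ be a nonempty finite set of $n$ alternatives. A choice rule $C$ on $A$ is (capacity-constrained) lexicographic if and only if it satisfies capacity-filling, gross substitutes, monotonicity, and the irrelevance of accepted alternatives.
   Context: Let $\mathcal{A}$ be the set of all nonempty subsets of $A$. A (capacity-constrained) choice rule is a map $C$ assigning to each problem $(S,q)\in\mathcal{A}\times\{1,\dots,n\}$ a nonempty set $C(S,q)\subseteq S$ with $|C(S,q)|\le q$; write $R(S,q)=S\setminus C(S,q)$ for the rejected alternatives. A priority ordering is a complete, transitive and antisymmetric binary relation on $A$; a priority profile is an ordered list $(\succ_1,\dots,\succ_n)$ of $n$ priority orderings. $C$ is (capacity-constrained) lexicographic for $(\succ_1,\dots,\succ_n)$ if for every $(S,q)$, $C(S,q)$ is the set obtained by choosing the $\succ_1$-highest alternative in $S$, then the $\succ_2$-highest alternative among the remaining alternatives of $S$, and so on, until $q$ alternatives have been chosen or no alternative is left. $C$ is (capacity-constrained) lexicographic if it is lexicographic for some priority profile. Capacity-filling: for each $(S,q)$, $|C(S,q)|=\min\{|S|,q\}$. Gross substitutes: for each $(S,q)$ and each $a,b\in S$ with $a\neq b$, if $a\in C(S,q)$ then $a\in C(S\setminus\{b\},q)$. Monotonicity: for each $S\in\mathcal{A}$ and $q\in\{1,\dots,n-1\}$, $C(S,q)\subseteq C(S,q+1)$. Irrelevance of accepted alternatives: for each $S,S'\in\mathcal{A}$ and $q\in\{1,\dots,n-1\}$, if $R(S,q)=R(S',q)$ then $C(S,q+1)\cap R(S,q)=C(S',q+1)\cap R(S',q)$.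 *)

From mathcomp Require Import all_boot.
Set Implicit Arguments. Unset Strict Implicit. Unset Printing Implicit Defensive.

Section Choice.
Variable A : finType.

(* A choice rule: C S q is only meaningful for S nonempty and 1 <= q <= n = #|A|. *)
Definition choice_fun := {set A} -> nat -> {set A}.

Definition in_domain (S : {set A}) (q : nat) := (S != set0) && (0 < q <= #|A|).

Definition is_choice_rule (C : choice_fun) : Prop :=
  forall S q, in_domain S q ->
    [/\ C S q \subset S, C S q != set0 & #|C S q| <= q].

Definition rejected (C : choice_fun) S q := S :\: C S q.

Definition priority_ordering (r : rel A) : Prop :=
  [/\ (forall x y, r x y || r y x),
      (forall x y z, r x y -> r y z -> r x z) &
      (forall x y, r x y -> r y x -> x = y)].

Definition best (r : rel A) (T : {set A}) : option A :=
  [pick x in T | [forall y in T, r x y]].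

Fixpoint lex_choice (prof : seq (rel A)) (R : {set A}) (q : nat) : {set A} :=
  match prof, q with
  | r :: prof', q'.+1 =>
      match best r R with
      | Some x => x |: lex_choice prof' (R :\ x) q'
      | None => set0
      end
  | _, _ => set0
  end.

Definition lexicographic (C : choice_fun) : Prop :=
  exists prof : #|A|.-tuple (rel A),
    (forall i : 'I_#|A|, priority_ordering (tnth prof i)) /\
    (forall S q, in_domain S q -> C S q = lex_choice prof S q).

Definition capacity_filling (C : choice_fun) : Prop :=
  forall S q, in_domain S q -> #|C S q| = minn #|S| q.

Definition gross_substitutes (C : choice_fun) : Prop :=
  forall S q, in_domain S q -> forall a b, a \in S -> b \in S -> a != b ->
    a \in C S q -> a \in C (S :\ b) q.

Definition monotonicity (C : choice_fun) : Prop :=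
  forall S q, S != set0 -> 0 < q -> q < #|A| -> C S q \subset C S q.+1.

Definition irrelevance_accepted (C : choice_fun) : Prop :=
  forall S S' q, S != set0 -> S' != set0 -> 0 < q -> q < #|A| ->
    rejected C S q = rejected C S' q ->
    C S q.+1 :&: rejected C S q = C S' q.+1 :&: rejected C S' q.

End Choice.

From mathcomp Require Import all_boot zify.
Set Implicit Arguments. Unset Strict Implicit. Unset Printing Implicit Defensive.

(* A lexicographic rule fills capacity q + 1 by adding to its choice at
   capacity q the best remaining alternative for the (q + 1)-th priority; all
   four axioms follow from this single step.  Conversely, let top q = C(A, q).
   By gross substitutes every choice C(S, q) contains S ∩ top q, so the set T
   of alternatives rejected from S at capacity q avoids top q, and T and
   T ∪ top q have the same rejected set at capacity q.  Irrelevance of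
   accepted alternatives then identifies the new alternative chosen from T at
   capacity q + 1 with the "marginal" choice C(T ∪ top q, q + 1) ∩ T.
   Capacity-filling and monotonicity make this marginal choice a singleton,
   gross substitutes makes it contraction consistent, so it picks the maximum
   of a priority ordering; these orderings, for q < n, form the profile. *)

Section Best.
Variable A : finType.
Implicit Types (r : rel A) (S : {set A}).

Definition set_of_option (o : option A) : {set A} :=
  if o is Some x then [set x] else set0.

Lemma priority_max r S : priority_ordering r -> S != set0 ->
  exists2 x, x \in S & {in S, forall y, r x y}.
Proof.
case=> total_r trans_r _ /set0Pn[a aS].
have mem_s : sort r (enum S) =i S by move=> y; rewrite mem_sort mem_enum.
have := sort_sorted total_r (enum S).
case: (sort r (enum S)) mem_s => [|x s] mem_s; first by have := mem_s a; rewrite aS.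
move=> /(order_path_min (fun y x z => trans_r x y z)) /allP r_x.
exists x => [|y]; first by rewrite -mem_s mem_head.
rewrite -mem_s inE => /predU1P[-> | /r_x //].
by have := total_r x x; rewrite orbb.
Qed.

Variant best_spec r S : option A -> Prop :=
  | BestNone of S = set0 : best_spec r S None
  | BestSome x of x \in S & {in S, forall y, r x y} : best_spec r S (Some x).

Lemma bestP r S : priority_ordering r -> best_spec r S (best r S).
Proof.
move=> r_po; rewrite /best; case: pickP => [x /andP[xS /forall_inP x_max] | no_max].
  by constructor.
constructor; apply/eqP; apply: contraT => /(priority_max r_po)[x xS x_max].
by have /negbT/negP[] := no_max x; rewrite xS; apply/forall_inP.
Qed.

Lemma best_set0 r : best r set0 = None.
Proof. by rewrite /best; case: pickP => // x; rewrite inE. Qed.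

Lemma mem_best r S x : best r S = Some x -> x \in S.
Proof. by rewrite /best; case: pickP => // y /andP[yS _] [<-]. Qed.

Lemma set_of_option_best_sub r S : set_of_option (best r S) \subset S.
Proof. by case E: (best r S) => [x|]; rewrite ?sub1set ?sub0set ?(mem_best E). Qed.

Lemma best_eq r S x : priority_ordering r -> x \in S -> {in S, forall y, r x y} ->
  best r S = Some x.
Proof.
move=> r_po xS x_max; case: (bestP S r_po) => [S0 | z zS z_max].
  by rewrite S0 inE in xS.
by case: r_po => _ _ anti; rewrite (anti z x (z_max x xS) (x_max z zS)).
Qed.

End Best.

Section LexChoice.
Variable A : finType.
Implicit Types (prof : seq (rel A)) (S : {set A}).

Lemma lex_choice0 prof S : lex_choice prof S 0 = set0.
Proof. by case: prof. Qed.

Lemma lex_choice_sub prof S q : lex_choice prof S q \subset S.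
Proof.
elim: prof S q => [|r prof IH] S [|q] //=; rewrite ?sub0set //.
case E: (best r S) => [x|]; last exact: sub0set.
by rewrite subUset sub1set (mem_best E) (subset_trans (IH _ _) (subD1set S x)).
Qed.

Lemma lex_choiceS r0 prof S q :
  (forall i, i < size prof -> priority_ordering (nth r0 prof i)) -> q < size prof ->
  lex_choice prof S q.+1 =
  lex_choice prof S q :|: set_of_option (best (nth r0 prof q) (S :\: lex_choice prof S q)).
Proof.
elim: prof S q => [|r prof IH] S q prof_po //= lt_q.
case: q lt_q => [|q] lt_q /=.
  by rewrite setD0 set0U; case: (best r S) => // x; rewrite lex_choice0 setU0.
case: (bestP S (prof_po 0 isT)) => [-> | x _ _]; first by rewrite set0D best_set0 setU0.
by rewrite IH // => [|i]; [rewrite setUA setDDl | exact: (prof_po i.+1)].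
Qed.

Variables (r0 : rel A) (prof : seq (rel A)).
Hypothesis prof_po : forall i, i < size prof -> priority_ordering (nth r0 prof i).

Lemma card_lex_choice S q : q <= size prof -> #|lex_choice prof S q| = minn #|S| q.
Proof.
elim: q => [|q IH] le_q; first by rewrite lex_choice0 cards0 minn0.
have := lex_choice_sub prof S q; set L := lex_choice prof S q => L_S.
have IHq : #|L| = minn #|S| q := IH (ltnW le_q).
rewrite (lex_choiceS _ prof_po) // -/L; case: (bestP _ (prof_po le_q)) => [/eqP | x].
  rewrite setD_eq0 setU0 => S_L; have := subset_leq_card S_L; lia.
rewrite inE => /andP[xL xS] _ /=; rewrite setUC cardsU1 xL.
have : x |: L \subset S by rewrite subUset sub1set xS.
move/subset_leq_card; rewrite cardsU1 xL; lia.
Qed.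

Lemma lex_choice_subS S q : q < size prof ->
  lex_choice prof S q \subset lex_choice prof S q.+1.
Proof. by move=> lt_q; rewrite (lex_choiceS _ prof_po) // subsetUl. Qed.

Lemma lex_choiceS_rejected S q : q < size prof ->
  lex_choice prof S q.+1 :&: (S :\: lex_choice prof S q) =
  set_of_option (best (nth r0 prof q) (S :\: lex_choice prof S q)).
Proof.
move=> lt_q; rewrite (lex_choiceS _ prof_po) // setIUl setDE setICA setICr setI0 set0U.
by apply/setIidPl; rewrite -setDE set_of_option_best_sub.
Qed.

Lemma lex_choice_restrict S S' q : q <= size prof -> S' \subset S ->
  lex_choice prof S q :&: S' \subset lex_choice prof S' q.
Proof.
move=> + S'_S; elim: q => [|q IH] le_q; first by rewrite !lex_choice0 set0I.
have {}IH := IH (ltnW le_q); set L := lex_choice prof S q; set L' := lex_choice prof S' q.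
apply/subsetP => a /setIP[]; rewrite (lex_choiceS _ prof_po) // -/L => /setUP[aL aS'|].
  by apply: subsetP (lex_choice_subS _ le_q) _ _; apply: subsetP IH _ _; apply/setIP.
case: (bestP _ (prof_po le_q)) => [_|x _ x_max]; first by rewrite inE.
move/set1P=> ->{a} xS'; rewrite (lex_choiceS _ prof_po) // -/L'; apply/setUP.
have [xL'|xL'] := boolP (x \in L'); [by left | right].
rewrite (best_eq (x := x) (prof_po le_q)) ?inE ?xL' ?xS' // => y /setDP[yS' yL'].
apply: x_max; rewrite inE (subsetP S'_S _ yS') andbT.
by apply: contra yL' => yL; apply: subsetP IH _ _; apply/setIP.
Qed.

End LexChoice.

Lemma in_domainD1 (A : finType) (S : {set A}) q a b :
  in_domain S q -> a \in S -> a != b -> in_domain (S :\ b) q.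
Proof.
case/and3P=> _ q0 le_q aS ab; rewrite /in_domain q0 le_q !andbT.
by apply/set0Pn; exists a; rewrite !inE ab.
Qed.

Lemma lexicographic_axioms (A : finType) (C : choice_fun A) : lexicographic C ->
  [/\ capacity_filling C, gross_substitutes C, monotonicity C & irrelevance_accepted C].
Proof.
case=> prof [prof_po C_lex]; pose r0 : rel A := fun _ _ => true.
have nth_po i : i < size prof -> priority_ordering (nth r0 prof i).
  by rewrite size_tuple => lt_i; rewrite -(tnth_nth r0 prof (Ordinal lt_i)).
have le_q (S : {set A}) q : in_domain S q -> q <= size prof.
  by rewrite size_tuple => /and3P[].
have C_lexS (S : {set A}) q : S != set0 -> 0 < q -> q < #|A| ->
    C S q = lex_choice prof S q /\ C S q.+1 = lex_choice prof S q.+1.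
  by move=> S0 q0 lt_q; split; apply: C_lex; rewrite /in_domain S0 ?q0 ?(ltnW lt_q) ?lt_q.
split.
- by move=> S q domS; rewrite C_lex // (card_lex_choice nth_po) ?(le_q S).
- move=> S q domS a b aS _ ab; rewrite !C_lex ?(in_domainD1 domS aS ab) // => aL.
  apply: subsetP (lex_choice_restrict nth_po (le_q _ _ domS) (subD1set S b)) _ _.
  by rewrite !inE aL ab aS.
- move=> S q S0 q0 lt_q; have [-> ->] := C_lexS S q S0 q0 lt_q.
  by rewrite (lex_choice_subS nth_po) // size_tuple.
- move=> S S' q S0 S'0 q0 lt_q; rewrite /rejected.
  have [-> ->] := C_lexS S q S0 q0 lt_q; have [-> ->] := C_lexS S' q S'0 q0 lt_q.
  have lt_q' : q < size prof by rewrite size_tuple.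
  by rewrite !(lex_choiceS_rejected nth_po _ lt_q') => ->.
Qed.

Section Rationalization.
Variables (A : finType) (U : {set A}) (f : {set A} -> {set A}).
Implicit Types T : {set A}.
Hypothesis f_sub : forall T, f T \subset T.
Hypothesis f_card : forall T, T \subset U -> T != set0 -> #|f T| = 1.
Hypothesis f_contract : forall T T' x, T \subset U -> T' \subset T -> x \in T' ->
  x \in f T -> x \in f T'.

Lemma chosen_set1 T : T \subset U -> T != set0 -> exists2 x, x \in T & f T = [set x].
Proof.
move=> TU T0; have /cards1P[x fT] := introT eqP (f_card TU T0).
by exists x => //; rewrite -sub1set -fT f_sub.
Qed.

Lemma chosen_eq T x y : T \subset U -> x \in f T -> y \in f T -> x = y.
Proof.
move=> TU xf; have [|z _ fT] := chosen_set1 TU.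
  by apply/set0Pn; exists x; apply: subsetP (f_sub T) _ xf.
by rewrite fT in xf *; move=> /set1P->; apply/set1P.
Qed.

Lemma chosen_pair T x y : T \subset U -> x \in f T -> y \in T -> x \in f [set x; y].
Proof.
move=> TU xf yT; apply: (f_contract TU _ _ xf); last by rewrite !inE eqxx.
by rewrite subUset !sub1set yT (subsetP (f_sub T) x xf).
Qed.

(* Only the order on U matters; enum_rank merely makes the relation total outside U. *)
Definition rationalization : rel A := fun x y =>
  if x \in U then (y \in U) ==> (x \in f [set x; y])
  else (y \notin U) && (enum_rank x <= enum_rank y).

Lemma rationalization_total x y : rationalization x y || rationalization y x.
Proof.
rewrite /rationalization.
case: (boolP (x \in U)) => xU; case: (boolP (y \in U)) => yU //=; last exact: leq_total.
have xyU : [set x; y] \subset U by rewrite subUset !sub1set xU.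
have [|z] := chosen_set1 xyU; first by apply/set0Pn; exists x; rewrite set21.
rewrite !inE => /orP[] /eqP-> fxy; first by rewrite fxy set11.
by rewrite [[set y; x]]setUC fxy set11 orbT.
Qed.

Lemma rationalization_anti x y :
  rationalization x y -> rationalization y x -> x = y.
Proof.
rewrite /rationalization.
case: (boolP (x \in U)) => xU; case: (boolP (y \in U)) => yU //=.
  move=> xy; rewrite setUC => yx.
  by apply: chosen_eq xy yx; rewrite subUset !sub1set xU.
by move=> xy yx; apply/enum_rank_inj/val_inj/anti_leq; rewrite xy.
Qed.

Lemma rationalization_trans x y z :
  rationalization x y -> rationalization y z -> rationalization x z.
Proof.
rewrite /rationalization.
case: (boolP (x \in U)) => xU; case: (boolP (y \in U)) => yU;
  case: (boolP (z \in U)) => zU //=; last exact: leq_trans.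
move=> xy yz.
have pairU a b : a \in U -> b \in U -> [set a; b] \subset U.
  by move=> aU bU; rewrite subUset !sub1set aU.
have xyzU : [set x; y; z] \subset U by rewrite !subUset !sub1set xU yU.
have [|w wxyz fxyz] := chosen_set1 xyzU; first by apply/set0Pn; exists x; rewrite !inE eqxx.
have chosen : w \in f [set x; y; z] by rewrite fxyz set11.
move: wxyz; rewrite !inE -orbA => /or3P[] /eqP wE; subst w.
- by apply: chosen_pair xyzU chosen _; rewrite !inE eqxx !orbT.
- have yx : y \in f [set y; x] by apply: chosen_pair xyzU chosen _; rewrite !inE eqxx.
  by rewrite setUC in yx; rewrite (chosen_eq (pairU x y xU yU) xy yx).
- have zy : z \in f [set z; y] by apply: chosen_pair xyzU chosen _; rewrite !inE eqxx !orbT.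
  by rewrite setUC in zy; rewrite -(chosen_eq (pairU y z yU zU) yz zy).
Qed.

Lemma rationalization_po : priority_ordering rationalization.
Proof.
split; [exact: rationalization_total | exact: rationalization_trans |].
exact: rationalization_anti.
Qed.

Lemma rationalization_best T : T \subset U -> set_of_option (best rationalization T) = f T.
Proof.
move=> TU; have [-> | T0] := eqVneq T set0.
  by rewrite best_set0; apply/esym/eqP; rewrite -subset0 f_sub.
have [x xT fT] := chosen_set1 TU T0.
rewrite fT (best_eq (x := x) rationalization_po) // => y yT.
rewrite /rationalization (subsetP TU x xT) (subsetP TU y yT) /=.
by apply: chosen_pair TU _ yT; rewrite fT set11.
Qed.

End Rationalization.

Section Characterization.
Variables (A : finType) (C : choice_fun A).
Hypotheses (C_rule : is_choice_rule C) (C_cf : capacity_filling C)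
  (C_gs : gross_substitutes C) (C_mon : monotonicity C) (C_irr : irrelevance_accepted C).
Implicit Types S T : {set A}.
Local Notation n := #|A|.

Lemma in_domainS S q : S != set0 -> q < n -> in_domain S q.+1.
Proof. by move=> S0 lt_q; rewrite /in_domain S0. Qed.

Lemma gross_substitutes_subset S S' q a : in_domain S q -> S' \subset S -> a \in S' ->
  a \in C S q -> a \in C S' q.
Proof.
move=> + + aS'; have [k] := ubnP #|S :\: S'|; elim: k S => // k IH S.
rewrite ltnS => le_k domS S'_S aC.
have [/eqP|[b /setDP[bS bS']]] := set_0Vmem (S :\: S').
  by rewrite setD_eq0 => S_S'; have -> : S' = S by apply/eqP; rewrite eqEsubset S'_S.
have ab : a != b by apply: contraNneq bS' => <-.
have aS := subsetP S'_S a aS'.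
apply: (IH (S :\ b)); last exact: (C_gs domS aS bS ab aC).
- by move: le_k; rewrite (cardsD1 b (S :\: S')) !setDDl setUC inE bS bS'.
- exact: in_domainD1 domS aS ab.
- by rewrite subsetD1 S'_S.
Qed.

Lemma in_domain_setT q : q < n -> in_domain [set: A] q.+1.
Proof. by move=> lt_q; rewrite in_domainS // -card_gt0 cardsT (leq_ltn_trans _ lt_q). Qed.

(* C is only specified for capacities q >= 1; capacity 0 accepts nothing. *)
Definition accepted S q := if q is 0 then set0 else C S q.
Definition top q := accepted [set: A] q.
Definition marginal q T := C (T :|: top q) q.+1 :&: T.

Lemma accepted_subS S q : q < n -> S != set0 -> accepted S q \subset C S q.+1.
Proof. by case: q => [|q] lt_q S0; [exact: sub0set | exact: C_mon]. Qed.

Lemma card_top q : q <= n -> #|top q| = q.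
Proof.
case: q => [|q] lt_q; first exact: cards0.
by rewrite /top /= C_cf ?in_domain_setT // cardsT; apply/minn_idPr.
Qed.

Lemma top_sub_accepted S q : q <= n -> S :&: top q \subset accepted S q.
Proof.
case: q => [|q] lt_q; first by rewrite setI0.
apply/subsetP => a /setIP[aS aT].
exact: gross_substitutes_subset (in_domain_setT lt_q) (subsetT S) aS aT.
Qed.

Lemma setU_top_neq0 T q : q < n -> T :|: top q.+1 != set0.
Proof.
by move=> lt_q; rewrite -card_gt0 (leq_trans _ (subset_leq_card (subsetUr _ _))) ?card_top.
Qed.

Lemma accepted_union_top T q : q <= n -> accepted (T :|: top q) q = top q.
Proof.
case: q => [|q] lt_q //; have TB0 := setU_top_neq0 T lt_q.
have top_sub : top q.+1 \subset C (T :|: top q.+1) q.+1.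
  by have := top_sub_accepted (T :|: top q.+1) lt_q; rewrite setIC setKU.
apply/esym/eqP; rewrite eqEcard top_sub card_top // C_cf ?geq_minr //.
exact: in_domainS.
Qed.

Lemma rejected_sub_top S q : q <= n -> S :\: accepted S q \subset ~: top q.
Proof.
move=> le_q; apply/subsetP => x /setDP[xS xA]; rewrite inE; apply: contra xA => xT.
by apply: subsetP (top_sub_accepted S le_q) _ _; rewrite inE xS xT.
Qed.

Lemma card_marginal q T : q < n -> T \subset ~: top q -> T != set0 -> #|marginal q T| = 1.
Proof.
move=> lt_q T_top T0; set X := C (T :|: top q) q.+1.
have TB0 : T :|: top q != set0.
  by rewrite -card_gt0 (leq_trans _ (subset_leq_card (subsetUl _ _))) ?card_gt0.
have domT := in_domainS TB0 lt_q.
have cardX : #|X| = q.+1.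
  rewrite C_cf // cardsU disjoint_setI0 ?disjoints_subset // cards0 (card_top (ltnW lt_q)).
  by move: T0; rewrite -card_gt0; lia.
have top_X : top q \subset X.
  by have := accepted_subS lt_q TB0; rewrite accepted_union_top // ltnW.
have X_sub : X \subset T :|: top q by case: (C_rule domT).
have -> : marginal q T = X :\: top q.
  apply/setP => x; rewrite !inE andbC; case xX: (x \in X); rewrite ?andbT ?andbF //.
  have := subsetP X_sub x xX; rewrite inE.
  have [xT _ | _ /= -> //] := boolP (x \in T).
  by have := subsetP T_top x xT; rewrite inE => ->.
by rewrite cardsD (setIidPr top_X) cardX card_top ?subSnn // ltnW.
Qed.

Lemma marginal_contract q T T' x : q < n -> T' \subset T -> x \in T' ->
  x \in marginal q T -> x \in marginal q T'.
Proof.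
move=> lt_q T'_T xT'; rewrite /marginal !inE xT' andbT => /andP[xC xT].
have TB0 : T :|: top q != set0 by apply/set0Pn; exists x; rewrite inE xT.
apply: gross_substitutes_subset xC; [exact: in_domainS | exact: setSU | by rewrite inE xT'].
Qed.

Definition priority q : rel A := rationalization (~: top q) (marginal q).

Lemma priority_po q : q < n -> priority_ordering (priority q).
Proof.
move=> lt_q; apply: rationalization_po => [T | T | T T' x _]; first exact: subsetIr.
  exact: card_marginal.
exact: marginal_contract.
Qed.

Lemma priority_best q T : q < n -> T \subset ~: top q ->
  set_of_option (best (priority q) T) = marginal q T.
Proof.
move=> lt_q; apply: rationalization_best => [T' | T' | T' T'' x _]; first exact: subsetIr.
  exact: card_marginal.
exact: marginal_contract.
Qed.

Lemma choice_succ_rejected S q : q < n -> S != set0 ->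
  C S q.+1 :&: (S :\: accepted S q) = marginal q (S :\: accepted S q).
Proof.
case: q => [|q] lt_q S0; first by rewrite /marginal /top /= setD0 setU0.
set R := S :\: accepted S q.+1.
have R_top : [disjoint R & top q.+1] by rewrite disjoints_subset rejected_sub_top // ltnW.
have rej : rejected C S q.+1 = rejected C (R :|: top q.+1) q.+1.
  have := accepted_union_top R (ltnW lt_q); rewrite /rejected /= => ->.
  by rewrite setDUl setDv setU0 (setDidPl R_top).
have irr := C_irr S0 (setU_top_neq0 R (ltnW lt_q)) (ltn0Sn q) lt_q rej.
by rewrite -rej in irr; exact: irr.
Qed.

Lemma choice_succ S q : q < n -> S != set0 ->
  C S q.+1 = accepted S q :|: set_of_option (best (priority q) (S :\: accepted S q)).
Proof.
move=> lt_q S0.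
rewrite priority_best ?rejected_sub_top ?(ltnW lt_q) // -choice_succ_rejected //.
have [C_S _ _] := C_rule (in_domainS S0 lt_q).
rewrite setIDA (setIidPl C_S) -{1}(setID (C S q.+1) (accepted S q)).
by rewrite (setIidPr (accepted_subS lt_q S0)).
Qed.

Lemma accepted_lex_choice S q : S != set0 -> q <= n ->
  accepted S q = lex_choice (mkseq priority n) S q.
Proof.
move=> S0; elim: q => [|q IH] lt_q; first by rewrite lex_choice0.
have prof_po i : i < size (mkseq priority n) ->
    priority_ordering (nth (priority 0) (mkseq priority n) i).
  by rewrite size_mkseq => lt_i; rewrite nth_mkseq //; apply: priority_po.
rewrite (lex_choiceS _ prof_po) ?size_mkseq // -IH ?(ltnW lt_q) // nth_mkseq //.
exact: choice_succ.
Qed.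

Lemma axioms_lexicographic : lexicographic C.
Proof.
have size_prof : size (mkseq priority n) == n by rewrite size_mkseq.
exists (Tuple size_prof); split => [i | S q /and3P[S0 q0 le_q]].
  by rewrite (tnth_nth (priority 0)) nth_mkseq //; apply: priority_po.
by rewrite /= -accepted_lex_choice //; case: q q0 {le_q}.
Qed.

End Characterization.

Theorem theorem1 (A : finType) (hA : 0 < #|A|) (C : choice_fun A) :
  is_choice_rule C ->
  (lexicographic C <->
   [/\ capacity_filling C, gross_substitutes C, monotonicity C &
       irrelevance_accepted C]).
Proof.
move=> C_rule; split; first exact: lexicographic_axioms.
by case=> C_cf C_gs C_mon C_irr; apply: axioms_lexicographic.
Qed.
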